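(* Let $\mathbb A$ be an abelian category with enough projective objects and let $(f_0,f_1):a\to b$ be a morphism in $\mathbb A^{[1]}_c$, with $a:A_1\to A_0$, $b:B_1\to B_0$. Let $Q$ be the push-out of $f_1:A_1\to B_1$ and $a:A_1\to A_0$, with canonical maps $q:B_1\to Q$, $\xi:A_0\to Q$ (so $qf_1=\xi a$), and let $q':Q\to B_0$ be the unique morphism with $q'q=b$ and $q'\xi=f_0$. Then $q':Q\to B_0$ is an object of $\mathbb A^{[1]}_c$, $(\mathrm{id}_{B_0},q):b\to q'$ is a morphism, $\xi$ is a 2-arrow $(\mathrm{id},q)\circ(f_0,f_1)\Rightarrow 0$, and the triple $(q',(\mathrm{id},q),\xi)$ is a 2-cokernel of $(f_0,f_1)$ both in $\mathbb A^{[1]}$ and in $\mathbb A^{[1]}_c$. In particular $\mathbb A^{[1]}_c$ has all 2-cokernels and the inclusion $\mathbb A^{[1]}_c\to\mathbb A^{[1]}$ preserves them.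
   Context: Let $\mathbb A$ be an abelian category. The 2-category $\mathbb A^{[1]}$ has as objects the morphisms $a:A_1\to A_0$ of $\mathbb A$. For objects $a:A_1\to A_0$ and $b:B_1\to B_0$, a morphism $a\to b$ is a pair $(f_0,f_1)$ of morphisms $f_i:A_i\to B_i$ of $\mathbb A$ with $b f_1=f_0 a$; composition is componentwise. A 2-arrow $(f_0,f_1)\Rightarrow(g_0,g_1)$ between morphisms $a\to b$ is a morphism $\alpha:A_0\to B_1$ of $\mathbb A$ with $f_1-g_1=\alpha a$ and $f_0-g_0=b\alpha$; vertical composition is addition of such $\alpha$'s, and whiskering is given by $(h_0,h_1)\circ\alpha=h_1\alpha$ and $\alpha\circ(e_0,e_1)=\alpha e_0$. All 2-arrows are invertible. $\mathbb A^{[1]}_c$ is the full 2-subcategory of $\mathbb A^{[1]}$ on the objects $a:A_1\to A_0$ with $A_0$ projective in $\mathbb A$. In a 2-category $\mathcal C$ of this kind (with zero morphisms), a 2-cokernel of $f:a\to b$ is a triple $(c,w:b\to c,\xi:wf\Rightarrow0)$ such that for every object $x$ of $\mathcal C$ the functor $v\mapsto (vw, v\xi)$ from $\mathbf{Hom}(c,x)$ to the groupoid of pairs $(u\in\mathbf{Hom}(b,x),\ \phi:uf\Rightarrow 0)$ (morphisms: 2-arrows $u\Rightarrow u'$ compatible with the $\phi$'s) is an equivalence of groupoids. *)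

Record PreAdd := MkPreAdd {
  Obj : Type;
  Hom : Obj -> Obj -> Type;
  comp : forall X Y Z : Obj, Hom Y Z -> Hom X Y -> Hom X Z;
  idm : forall X : Obj, Hom X X;
  addm : forall X Y : Obj, Hom X Y -> Hom X Y -> Hom X Y;
  oppm : forall X Y : Obj, Hom X Y -> Hom X Y;
  zerom : forall X Y : Obj, Hom X Y;
  comp_assoc : forall X Y Z W (h : Hom Z W) (g : Hom Y Z) (f : Hom X Y),
      comp X Y W (comp Y Z W h g) f = comp X Z W h (comp X Y Z g f);
  comp_idl : forall X Y (f : Hom X Y), comp X Y Y (idm Y) f = f;
  comp_idr : forall X Y (f : Hom X Y), comp X X Y f (idm X) = f;
  addmA : forall X Y (f g h : Hom X Y),
      addm X Y f (addm X Y g h) = addm X Y (addm X Y f g) h;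
  addmC : forall X Y (f g : Hom X Y), addm X Y f g = addm X Y g f;
  add0m : forall X Y (f : Hom X Y), addm X Y (zerom X Y) f = f;
  addNm : forall X Y (f : Hom X Y), addm X Y (oppm X Y f) f = zerom X Y;
  comp_addl : forall X Y Z (g g' : Hom Y Z) (f : Hom X Y),
      comp X Y Z (addm Y Z g g') f = addm X Z (comp X Y Z g f) (comp X Y Z g' f);
  comp_addr : forall X Y Z (g : Hom Y Z) (f f' : Hom X Y),
      comp X Y Z g (addm X Y f f') = addm X Z (comp X Y Z g f) (comp X Y Z g f')
}.

Arguments Hom {p} _ _.
Arguments comp {p X Y Z} _ _.
Arguments idm {p} X.
Arguments addm {p X Y} _ _.
Arguments oppm {p X Y} _.
Arguments zerom {p} X Y.

Notation "g ⊙ f" := (comp g f) (at level 40, left associativity).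
Notation "f ⊕ g" := (addm f g) (at level 50, left associativity).
Notation "f ⊖ g" := (addm f (oppm g)) (at level 50, left associativity).
Notation "'0m'" := (zerom _ _).

Section Preds.
Context {C : PreAdd}.

Definition mono {X Y : Obj C} (f : Hom X Y) : Prop :=
  forall W (g h : Hom W X), f ⊙ g = f ⊙ h -> g = h.

Definition epi {X Y : Obj C} (f : Hom X Y) : Prop :=
  forall W (g h : Hom Y W), g ⊙ f = h ⊙ f -> g = h.

Definition is_kernel {X Y K : Obj C} (f : Hom X Y) (k : Hom K X) : Prop :=
  f ⊙ k = 0m /\
  forall W (g : Hom W X), f ⊙ g = 0m -> exists! h : Hom W K, k ⊙ h = g.

Definition is_cokernel {X Y K : Obj C} (f : Hom X Y) (c : Hom Y K) : Prop :=
  c ⊙ f = 0m /\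
  forall W (g : Hom Y W), g ⊙ f = 0m -> exists! h : Hom K W, h ⊙ c = g.

Definition is_zero_obj (Z : Obj C) : Prop :=
  (forall X (f : Hom Z X), f = 0m) /\ (forall X (g : Hom X Z), g = 0m).

Definition is_biproduct (X Y S : Obj C) (i1 : Hom X S) (i2 : Hom Y S)
    (p1 : Hom S X) (p2 : Hom S Y) : Prop :=
  p1 ⊙ i1 = idm X /\ p2 ⊙ i2 = idm Y /\ p1 ⊙ i2 = 0m /\ p2 ⊙ i1 = 0m /\
  i1 ⊙ p1 ⊕ i2 ⊙ p2 = idm S.

Definition is_pushout {A B A' Q : Obj C} (f : Hom A B) (g : Hom A A')
    (q : Hom B Q) (xi : Hom A' Q) : Prop :=
  q ⊙ f = xi ⊙ g /\
  forall W (u : Hom B W) (v : Hom A' W), u ⊙ f = v ⊙ g ->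
    exists! h : Hom Q W, h ⊙ q = u /\ h ⊙ xi = v.

Definition projective (P : Obj C) : Prop :=
  forall X Y (e : Hom X Y) (g : Hom P Y), epi e -> exists h : Hom P X, e ⊙ h = g.

End Preds.

Definition is_abelian (C : PreAdd) : Prop :=
  (exists Z : Obj C, is_zero_obj Z) /\
  (forall X Y : Obj C, exists S i1 i2 p1 p2, @is_biproduct C X Y S i1 i2 p1 p2) /\
  (forall (X Y : Obj C) (f : Hom X Y), exists K (k : Hom K X), is_kernel f k) /\
  (forall (X Y : Obj C) (f : Hom X Y), exists K (c : Hom Y K), is_cokernel f c) /\
  (forall (X Y : Obj C) (f : Hom X Y), mono f -> exists Z (g : Hom Y Z), is_kernel g f) /\
  (forall (X Y : Obj C) (f : Hom X Y), epi f -> exists Z (g : Hom Z X), is_cokernel g f).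

Record AbCat := MkAbCat { abcat :> PreAdd; abcat_ax : is_abelian abcat }.

Definition enough_projectives (C : PreAdd) : Prop :=
  forall X : Obj C, exists (P : Obj C) (e : Hom P X), projective P /\ epi e.

Record Arr (C : PreAdd) := MkArr { ar1 : Obj C; ar0 : Obj C; ard : Hom ar1 ar0 }.
Arguments MkArr {C ar1 ar0} ard.
Arguments ar1 {C} _.
Arguments ar0 {C} _.
Arguments ard {C} _.

Section TwoCat.
Context {C : PreAdd}.

Definition is_mor (a b : Arr C) (f0 : Hom (ar0 a) (ar0 b)) (f1 : Hom (ar1 a) (ar1 b)) : Prop :=
  ard b ⊙ f1 = f0 ⊙ ard a.

Definition is_2arrow (a b : Arr C) (f0 g0 : Hom (ar0 a) (ar0 b)) (f1 g1 : Hom (ar1 a) (ar1 b))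
    (al : Hom (ar0 a) (ar1 b)) : Prop :=
  f1 ⊖ g1 = al ⊙ ard a /\ f0 ⊖ g0 = ard b ⊙ al.

(** objects of A^[1]_c *)
Definition inC (a : Arr C) : Prop := projective (ar0 a).

(** (c, w = (w0,w1), xi) is a 2-cokernel of f = (f0,f1) : a -> b in the full
   2-subcategory of A^[1] on objects satisfying P.  The comparison functor
   Hom(c,x) -> {(u, phi : u f => 0)},  v |-> (v w, v xi),  gamma |-> gamma w,
   is required to be an equivalence of groupoids, i.e. essentially surjective,
   full and faithful. Vertical composition of 2-arrows is addition, so a
   morphism beta : (u,phi) -> (u',phi') is a 2-arrow beta : u => u' with
   (beta o f) + phi' = phi. *)
Definition is_2cokernel (P : Arr C -> Prop) (a b : Arr C)
    (f0 : Hom (ar0 a) (ar0 b)) (f1 : Hom (ar1 a) (ar1 b))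
    (c : Arr C) (w0 : Hom (ar0 b) (ar0 c)) (w1 : Hom (ar1 b) (ar1 c))
    (xi : Hom (ar0 a) (ar1 c)) : Prop :=
  P c /\ is_mor b c w0 w1 /\ is_2arrow a c (w0 ⊙ f0) 0m (w1 ⊙ f1) 0m xi /\
  forall x : Arr C, P x ->
    (* essential surjectivity *)
    (forall (u0 : Hom (ar0 b) (ar0 x)) (u1 : Hom (ar1 b) (ar1 x))
            (phi : Hom (ar0 a) (ar1 x)),
        is_mor b x u0 u1 -> is_2arrow a x (u0 ⊙ f0) 0m (u1 ⊙ f1) 0m phi ->
        exists (v0 : Hom (ar0 c) (ar0 x)) (v1 : Hom (ar1 c) (ar1 x))
               (beta : Hom (ar0 b) (ar1 x)),
          is_mor c x v0 v1 /\ is_2arrow b x (v0 ⊙ w0) u0 (v1 ⊙ w1) u1 beta /\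
          beta ⊙ f0 ⊕ phi = v1 ⊙ xi) /\
    (* fullness *)
    (forall (v0 v0' : Hom (ar0 c) (ar0 x)) (v1 v1' : Hom (ar1 c) (ar1 x))
            (beta : Hom (ar0 b) (ar1 x)),
        is_mor c x v0 v1 -> is_mor c x v0' v1' ->
        is_2arrow b x (v0 ⊙ w0) (v0' ⊙ w0) (v1 ⊙ w1) (v1' ⊙ w1) beta ->
        beta ⊙ f0 ⊕ v1' ⊙ xi = v1 ⊙ xi ->
        exists gamma : Hom (ar0 c) (ar1 x),
          is_2arrow c x v0 v0' v1 v1' gamma /\ gamma ⊙ w0 = beta) /\
    (* faithfulness *)
    (forall (v0 v0' : Hom (ar0 c) (ar0 x)) (v1 v1' : Hom (ar1 c) (ar1 x))
            (gamma gamma' : Hom (ar0 c) (ar1 x)),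
        is_mor c x v0 v1 -> is_mor c x v0' v1' ->
        is_2arrow c x v0 v0' v1 v1' gamma -> is_2arrow c x v0 v0' v1 v1' gamma' ->
        gamma ⊙ w0 = gamma' ⊙ w0 -> gamma = gamma').

End TwoCat.

Definition allA1 {C : PreAdd} (_ : Arr C) : Prop := True.

(* A pair (u, phi : u f => 0) into x is exactly a morphism out of the push-out: the push-out
   property gives h : Q -> X1 with h q = u1 and h xi = phi, and d_x h = u0 q' since both sides
   agree after q and after xi.  So every such pair is strictly (v w, v xi) with v = (u0, h), and a
   2-arrow beta : v w => v' w compatible with xi satisfies v1 - v1' = beta q', i.e. beta is its own
   whiskering by w = (1, q).  This holds for every target x, hence in A^[1] and in A^[1]_c alike
   (q' has the projective target B0).

   For an arbitrary 2-cokernel c of (f0,f1) in A^[1]_c, compare it with the push-out one c0: the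
   universal property of c at c0 gives v : c -> c0 with a 2-arrow v w => (1, q), the push-out
   gives t : c0 -> c, and fullness of c at c itself gives a 2-arrow eps : t v => 1.  These data
   let one transport the universal property of c0 (valid for all targets) back to c. *)


Section Preadditive.
Context {C : PreAdd}.

Lemma addm0 {X Y : Obj C} (f : Hom X Y) : f ⊕ 0m = f.
Proof. rewrite addmC; apply add0m. Qed.

Lemma addmN {X Y : Obj C} (f : Hom X Y) : f ⊖ f = 0m.
Proof. rewrite addmC; apply addNm. Qed.

Lemma addIm {X Y : Obj C} (x y z : Hom X Y) : x ⊕ y = x ⊕ z -> y = z.
Proof.
  intro H. rewrite <- (add0m _ _ _ y), <- (add0m _ _ _ z), <- (addNm _ _ _ x), <- !addmA, H.
  reflexivity.
Qed.

Lemma comp0l {X Y Z : Obj C} (f : Hom X Y) : zerom Y Z ⊙ f = 0m.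
Proof. apply (addIm (zerom Y Z ⊙ f)). rewrite addm0, <- comp_addl, add0m. reflexivity. Qed.

Lemma comp0r {X Y Z : Obj C} (g : Hom Y Z) : g ⊙ zerom X Y = 0m.
Proof. apply (addIm (g ⊙ zerom X Y)). rewrite addm0, <- comp_addr, add0m. reflexivity. Qed.

Lemma oppm_unique {X Y : Obj C} (x y : Hom X Y) : x ⊕ y = 0m -> x = oppm y.
Proof. intro H. rewrite <- (addm0 x), <- (addmN y), addmA, H, add0m. reflexivity. Qed.

Lemma comp_oppl {X Y Z : Obj C} (g : Hom Y Z) (f : Hom X Y) : oppm g ⊙ f = oppm (g ⊙ f).
Proof. apply oppm_unique. rewrite <- comp_addl, addNm. apply comp0l. Qed.

Lemma comp_oppr {X Y Z : Obj C} (g : Hom Y Z) (f : Hom X Y) : g ⊙ oppm f = oppm (g ⊙ f).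
Proof. apply oppm_unique. rewrite <- comp_addr, addNm. apply comp0r. Qed.

Lemma comp_subl {X Y Z : Obj C} (g g' : Hom Y Z) (f : Hom X Y) : (g ⊖ g') ⊙ f = g ⊙ f ⊖ g' ⊙ f.
Proof. rewrite comp_addl, comp_oppl. reflexivity. Qed.

Lemma comp_subr {X Y Z : Obj C} (g : Hom Y Z) (f f' : Hom X Y) : g ⊙ (f ⊖ f') = g ⊙ f ⊖ g ⊙ f'.
Proof. rewrite comp_addr, comp_oppr. reflexivity. Qed.

Lemma comp_subr_id {Y Z : Obj C} (g : Hom Y Z) (f : Hom Y Y) : g ⊙ f ⊖ g = g ⊙ (f ⊖ idm Y).
Proof. rewrite comp_subr, comp_idr. reflexivity. Qed.

Lemma subm0 {X Y : Obj C} (f : Hom X Y) : f ⊖ 0m = f.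
Proof. rewrite <- (oppm_unique _ _ (add0m _ _ _ 0m)). apply addm0. Qed.

Lemma subm_eq {X Y : Obj C} (x y z : Hom X Y) : x ⊖ y = z <-> x = z ⊕ y.
Proof.
  split; intro H.
  - rewrite <- H, <- addmA, addNm, addm0. reflexivity.
  - rewrite H, <- addmA, addmN, addm0. reflexivity.
Qed.

Lemma subKr {X Y : Obj C} (x y : Hom X Y) : x ⊖ (x ⊖ y) = y.
Proof.
  apply subm_eq. rewrite addmC, <- addmA, addNm, addm0. reflexivity.
Qed.

Lemma addKsub {X Y : Obj C} (x y : Hom X Y) : (x ⊕ y) ⊖ x = y.
Proof. apply subm_eq. apply addmC. Qed.

Lemma pushout_hom_eq {A B A' Q W : Obj C} (f : Hom A B) (g : Hom A A') q xi (h h' : Hom Q W) :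
  is_pushout f g q xi -> h ⊙ q = h' ⊙ q -> h ⊙ xi = h' ⊙ xi -> h = h'.
Proof.
  intros [Hc Hu] H1 H2.
  destruct (Hu W (h ⊙ q) (h ⊙ xi)) as [k [_ Hk]].
  { rewrite !comp_assoc, Hc. reflexivity. }
  transitivity k; [symmetry|]; apply Hk; split; auto.
Qed.

Lemma is_mor_sub (c x : Arr C) v0 v0' v1 v1' :
  is_mor c x v0 v1 -> is_mor c x v0' v1' -> is_mor c x (v0 ⊖ v0') (v1 ⊖ v1').
Proof. unfold is_mor. intros H H'. rewrite comp_subr, comp_subl, H, H'. reflexivity. Qed.

End Preadditive.

(* The push-out is the cokernel of (i1 f - i2 g) : A -> B ⊕ A'. *)
Lemma pushout_exists (C : AbCat) (A B A' : Obj C) (f : Hom A B) (g : Hom A A') :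
  exists Q (q : Hom B Q) (xi : Hom A' Q), is_pushout f g q xi.
Proof.
  destruct (abcat_ax C) as [_ [Hbi [_ [Hcok _]]]].
  destruct (Hbi B A') as [S [i1 [i2 [p1 [p2 [E1 [E2 [E3 [E4 E5]]]]]]]]].
  destruct (Hcok _ _ (i1 ⊙ f ⊖ i2 ⊙ g)) as [K [c [Hc0 Hcu]]].
  exists K, (c ⊙ i1), (c ⊙ i2). split.
  { rewrite comp_subr in Hc0. apply subm_eq in Hc0. rewrite add0m in Hc0.
    rewrite !comp_assoc. exact Hc0. }
  intros W u v Huv.
  destruct (Hcu W (u ⊙ p1 ⊕ v ⊙ p2)) as [h [Hh Hhu]].
  { rewrite comp_subr, !comp_addl, !comp_assoc,
      <- !(comp_assoc _ _ _ _ _ p1), <- !(comp_assoc _ _ _ _ _ p2),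
      E1, E2, E3, E4, !comp_idl, !comp0l, !comp0r, addm0, add0m, Huv.
    apply addmN. }
  exists h. split.
  - rewrite <- !comp_assoc, Hh, !comp_addl, !comp_assoc, E1, E2, E3, E4, !comp0r, !comp_idr,
      addm0, add0m.
    split; reflexivity.
  - intros h' [H1 H2]. apply Hhu. rewrite <- comp_assoc in H1, H2.
    rewrite <- (comp_idr _ _ _ (h' ⊙ c)), <- E5, comp_addr, <- !comp_assoc, H1, H2. reflexivity.
Qed.

Section PushoutCokernel.
Context {C : PreAdd} (a b : Arr C) (f0 : Hom (ar0 a) (ar0 b)) (f1 : Hom (ar1 a) (ar1 b))
  (Q : Obj C) (q : Hom (ar1 b) Q) (xi : Hom (ar0 a) Q) (q' : Hom Q (ar0 b)).
Hypotheses (Hpo : is_pushout f1 (ard a) q xi) (Hq : q' ⊙ q = ard b) (Hxi : q' ⊙ xi = f0).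

Lemma pushout_lift (x : Arr C) u0 u1 phi :
  is_mor b x u0 u1 -> is_2arrow a x (u0 ⊙ f0) 0m (u1 ⊙ f1) 0m phi ->
  exists h : Hom Q (ar1 x), h ⊙ q = u1 /\ h ⊙ xi = phi /\ ard x ⊙ h = u0 ⊙ q'.
Proof.
  intros Hm [H1 H0]. rewrite subm0 in H1; rewrite subm0 in H0.
  destruct (proj2 Hpo _ u1 phi H1) as [h [[Hh1 Hh2] _]].
  exists h. split; [exact Hh1|]. split; [exact Hh2|].
  apply (pushout_hom_eq f1 (ard a) q xi); [exact Hpo| |].
  - rewrite !comp_assoc, Hh1, Hq. exact Hm.
  - rewrite !comp_assoc, Hh2, Hxi. symmetry. exact H0.
Qed.

Lemma pushout_sub_whisker (x : Arr C) (v1 v1' : Hom Q (ar1 x)) (beta : Hom (ar0 b) (ar1 x)) :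
  v1 ⊙ q ⊖ v1' ⊙ q = beta ⊙ ard b -> beta ⊙ f0 ⊕ v1' ⊙ xi = v1 ⊙ xi -> v1 ⊖ v1' = beta ⊙ q'.
Proof.
  intros H1 Hc.
  apply (pushout_hom_eq f1 (ard a) q xi); [exact Hpo| |].
  - rewrite comp_subl, H1, comp_assoc, Hq. reflexivity.
  - rewrite comp_subl, comp_assoc, Hxi. apply subm_eq. symmetry. exact Hc.
Qed.

Lemma pushout_is_2cokernel (P : Arr C -> Prop) :
  P (MkArr q') -> is_2cokernel P a b f0 f1 (MkArr q') (idm _) q xi.
Proof.
  intro HP. split; [exact HP|]. split.
  { unfold is_mor; simpl. rewrite comp_idl. exact Hq. }
  split.
  { unfold is_2arrow; simpl. rewrite !subm0, comp_idl. split; [apply Hpo | symmetry; exact Hxi]. }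
  intros x _. split; [|split].
  - intros u0 u1 phi Hm H2.
    destruct (pushout_lift x u0 u1 phi Hm H2) as [h [Hh1 [Hh2 Hh3]]].
    exists u0, h, 0m. split; [exact Hh3|]. split.
    + unfold is_2arrow; simpl. rewrite Hh1, comp_idr, !addmN, comp0l, comp0r. split; reflexivity.
    + rewrite comp0l, add0m. symmetry. exact Hh2.
  - intros v0 v0' v1 v1' beta _ _ [H1 H0] Hc. simpl in *. rewrite !comp_idr in H0.
    exists beta. rewrite comp_idr. split; [split|]; [|exact H0|reflexivity].
    exact (pushout_sub_whisker x v1 v1' beta H1 Hc).
  - intros v0 v0' v1 v1' g g' _ _ _ _ H. rewrite !comp_idr in H. exact H.
Qed.

Section Comparison.
Context (c : Arr C) (w0 : Hom (ar0 b) (ar0 c)) (w1 : Hom (ar1 b) (ar1 c)) (xc : Hom (ar0 a) (ar1 c))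
  (v0 : Hom (ar0 c) (ar0 b)) (v1 : Hom (ar1 c) Q) (bv : Hom (ar0 b) Q)
  (t1 : Hom Q (ar1 c)) (eps : Hom (ar0 c) (ar1 c)).
Hypotheses (Hvm : is_mor c (MkArr q') v0 v1)
  (Hv : is_2arrow b (MkArr q') (v0 ⊙ w0) (idm _) (v1 ⊙ w1) q bv)
  (Hvc : bv ⊙ f0 ⊕ xi = v1 ⊙ xc)
  (Ht1 : t1 ⊙ q = w1) (Ht2 : t1 ⊙ xi = xc)
  (He : is_2arrow c c (w0 ⊙ v0) (idm _) (t1 ⊙ v1) (idm _) eps)
  (Hew : eps ⊙ w0 = t1 ⊙ bv).

Lemma comparison_compose (x : Arr C) u0 u1 phi (s : Hom Q (ar1 x)) :
  s ⊙ q = u1 -> s ⊙ xi = phi -> ard x ⊙ s = u0 ⊙ q' ->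
  is_mor c x (u0 ⊙ v0) (s ⊙ v1) /\ is_2arrow b x (u0 ⊙ v0 ⊙ w0) u0 (s ⊙ v1 ⊙ w1) u1 (s ⊙ bv) /\
  s ⊙ bv ⊙ f0 ⊕ phi = s ⊙ v1 ⊙ xc.
Proof.
  intros Hs1 Hs2 Hs3. destruct Hv as [Hv1 Hv0]. unfold is_mor in Hvm; simpl in *.
  split; [|split].
  - unfold is_mor. rewrite <- comp_assoc, Hs3, !comp_assoc, Hvm. reflexivity.
  - split.
    + rewrite <- Hs1, comp_assoc, <- comp_subr, Hv1, comp_assoc. reflexivity.
    + rewrite comp_assoc, comp_subr_id, Hv0, <- !comp_assoc, Hs3. reflexivity.
  - rewrite !comp_assoc, <- Hvc, comp_addr, Hs2. reflexivity.
Qed.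

Lemma comparison_ess_surj (x : Arr C) u0 u1 phi :
  is_mor b x u0 u1 -> is_2arrow a x (u0 ⊙ f0) 0m (u1 ⊙ f1) 0m phi ->
  exists (v0' : Hom (ar0 c) (ar0 x)) (v1' : Hom (ar1 c) (ar1 x)) (beta : Hom (ar0 b) (ar1 x)),
    is_mor c x v0' v1' /\ is_2arrow b x (v0' ⊙ w0) u0 (v1' ⊙ w1) u1 beta /\
    beta ⊙ f0 ⊕ phi = v1' ⊙ xc.
Proof.
  intros Hm H2.
  destruct (pushout_lift x u0 u1 phi Hm H2) as [s [Hs1 [Hs2 Hs3]]].
  exists (u0 ⊙ v0), (s ⊙ v1), (s ⊙ bv).
  exact (comparison_compose x u0 u1 phi s Hs1 Hs2 Hs3).
Qed.

Lemma comparison_full (x : Arr C) g0 g0' g1 g1' (beta : Hom (ar0 b) (ar1 x)) :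
  is_mor c x g0 g1 -> is_mor c x g0' g1' ->
  is_2arrow b x (g0 ⊙ w0) (g0' ⊙ w0) (g1 ⊙ w1) (g1' ⊙ w1) beta ->
  beta ⊙ f0 ⊕ g1' ⊙ xc = g1 ⊙ xc ->
  exists gamma : Hom (ar0 c) (ar1 x),
    is_2arrow c x g0 g0' g1 g1' gamma /\ gamma ⊙ w0 = beta.
Proof.
  intros Hg Hg' [H1 H0] Hc.
  pose proof (is_mor_sub c x g0 g0' g1 g1' Hg Hg') as Hd. unfold is_mor in Hd.
  destruct Hv as [_ Hv0]. destruct He as [He1 He0]. unfold is_mor in Hvm; simpl in *.
  rewrite <- comp_subl in H0.
  assert (Hdt : (g1 ⊖ g1') ⊙ t1 = beta ⊙ q').
  { rewrite comp_subl. apply pushout_sub_whisker; rewrite !comp_assoc; [rewrite Ht1 | rewrite Ht2].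
    - exact H1.
    - exact Hc. }
  exists (beta ⊙ v0 ⊖ (g1 ⊖ g1') ⊙ eps). split; [split|].
  - rewrite comp_subl, !comp_assoc, <- Hvm, <- He1, <- !comp_assoc, <- Hdt,
      comp_subr, comp_idr, !comp_assoc.
    symmetry. apply subKr.
  - rewrite (comp_subr (ard x)), <- !comp_assoc, <- H0, Hd, !comp_assoc, <- comp_subr, <- He0,
      subKr, comp_idr.
    reflexivity.
  - apply subm_eq in Hv0.
    rewrite comp_subl, !comp_assoc, Hv0, Hew, comp_addr, comp_idr, <- !comp_assoc, Hdt.
    apply addKsub.
Qed.

(* [w] has the retraction [v] up to the 2-arrow [eps], so whiskering by [w] is injective. *)
Lemma comparison_faithful (x : Arr C) g0 g0' g1 g1' (gamma gamma' : Hom (ar0 c) (ar1 x)) :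
  is_2arrow c x g0 g0' g1 g1' gamma -> is_2arrow c x g0 g0' g1 g1' gamma' ->
  gamma ⊙ w0 = gamma' ⊙ w0 -> gamma = gamma'.
Proof.
  intros [G1 _] [G1' _] Hgw. destruct He as [_ He0].
  assert (Hid : idm (ar0 c) = w0 ⊙ v0 ⊖ ard c ⊙ eps) by (rewrite <- He0; symmetry; apply subKr).
  rewrite <- (comp_idr _ _ _ gamma), <- (comp_idr _ _ _ gamma'), Hid, !comp_subr,
    <- !comp_assoc, Hgw, <- G1, G1'.
  reflexivity.
Qed.

End Comparison.

Lemma inC_2cokernel_is_2cokernel (c : Arr C) w0 w1 xc :
  inC b -> is_2cokernel inC a b f0 f1 c w0 w1 xc -> is_2cokernel allA1 a b f0 f1 c w0 w1 xc.
Proof.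
  intros Hb [Hc [Hw [Hxc Huniv]]].
  destruct (pushout_is_2cokernel inC Hb) as [_ [Hm0 [Hxi0 _]]].
  destruct (proj1 (Huniv (MkArr q') Hb) (idm _) q xi Hm0 Hxi0)
    as [v0 [v1 [bv [Hvm [Hv Hvc]]]]].
  destruct (pushout_lift c w0 w1 xc Hw Hxc) as [t1 [Ht1 [Ht2 Ht3]]].
  destruct (comparison_compose c w0 w1 xc v0 v1 bv Hvm Hv Hvc c w0 w1 xc t1 Ht1 Ht2 Ht3)
    as [Htv [Htv2 Htvc]].
  destruct (proj1 (proj2 (Huniv c Hc)) (w0 ⊙ v0) (idm _) (t1 ⊙ v1) (idm _) (t1 ⊙ bv))
    as [eps [He Hew]].
  - exact Htv.
  - unfold is_mor. rewrite comp_idl, comp_idr. reflexivity.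
  - rewrite !comp_idl. exact Htv2.
  - rewrite comp_idl. exact Htvc.
  - split; [exact I|]. split; [exact Hw|]. split; [exact Hxc|].
    intros x _. split; [|split].
    + exact (comparison_ess_surj c w0 w1 xc v0 v1 bv Hvm Hv Hvc x).
    + exact (comparison_full c w0 w1 xc v0 v1 bv t1 eps Hvm Hv Ht1 Ht2 He Hew x).
    + intros g0 g0' g1 g1' gamma gamma' _ _.
      exact (comparison_faithful c w0 v0 v1 t1 eps He x g0 g0' g1 g1' gamma gamma').
Qed.

End PushoutCokernel.

Lemma pushout_mediator_exists (C : AbCat) (a b : Arr C) f0 f1 :
  is_mor a b f0 f1 ->
  exists Q (q : Hom (ar1 b) Q) (xi : Hom (ar0 a) Q) (q' : Hom Q (ar0 b)),
    is_pushout f1 (ard a) q xi /\ q' ⊙ q = ard b /\ q' ⊙ xi = f0.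
Proof.
  intro Hab.
  destruct (pushout_exists C _ _ _ f1 (ard a)) as [Q [q [xi Hpo]]].
  destruct (proj2 Hpo _ (ard b) f0 Hab) as [q' [[Hq Hxi] _]].
  exists Q, q, xi, q'. auto.
Qed.

Theorem mainTheorem10 (C : AbCat) :
  enough_projectives C ->
  (forall (a b : Arr C) (f0 : Hom (ar0 a) (ar0 b)) (f1 : Hom (ar1 a) (ar1 b)),
     inC a -> inC b -> is_mor a b f0 f1 ->
     forall (Q : Obj C) (q : Hom (ar1 b) Q) (xi : Hom (ar0 a) Q),
       is_pushout f1 (ard a) q xi ->
       forall q' : Hom Q (ar0 b), q' ⊙ q = ard b -> q' ⊙ xi = f0 ->
       inC (MkArr q') /\
       is_mor b (MkArr q') (idm (ar0 b)) q /\
       is_2arrow a (MkArr q') (idm (ar0 b) ⊙ f0) 0m (q ⊙ f1) 0m xi /\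
       is_2cokernel allA1 a b f0 f1 (MkArr q') (idm (ar0 b)) q xi /\
       is_2cokernel inC a b f0 f1 (MkArr q') (idm (ar0 b)) q xi) /\
  (forall (a b : Arr C) (f0 : Hom (ar0 a) (ar0 b)) (f1 : Hom (ar1 a) (ar1 b)),
     inC a -> inC b -> is_mor a b f0 f1 ->
     exists (c : Arr C) (w0 : Hom (ar0 b) (ar0 c)) (w1 : Hom (ar1 b) (ar1 c))
            (xi : Hom (ar0 a) (ar1 c)),
       is_2cokernel inC a b f0 f1 c w0 w1 xi) /\
  (forall (a b : Arr C) (f0 : Hom (ar0 a) (ar0 b)) (f1 : Hom (ar1 a) (ar1 b)),
     inC a -> inC b -> is_mor a b f0 f1 ->
     forall (c : Arr C) (w0 : Hom (ar0 b) (ar0 c)) (w1 : Hom (ar1 b) (ar1 c))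
            (xi : Hom (ar0 a) (ar1 c)),
       is_2cokernel inC a b f0 f1 c w0 w1 xi ->
       is_2cokernel allA1 a b f0 f1 c w0 w1 xi).
Proof.
  intros _. split; [|split].
  - intros a b f0 f1 _ Hb Hab Q q xi Hpo q' Hq Hxi.
    pose proof (pushout_is_2cokernel a b f0 f1 Q q xi q' Hpo Hq Hxi allA1 I) as Hall.
    pose proof (pushout_is_2cokernel a b f0 f1 Q q xi q' Hpo Hq Hxi inC Hb) as HinC.
    pose proof Hall as (_ & Hm & Hxi0 & _).
    exact (conj Hb (conj Hm (conj Hxi0 (conj Hall HinC)))).
  - intros a b f0 f1 _ Hb Hab.
    destruct (pushout_mediator_exists C a b f0 f1 Hab) as (Q & q & xi & q' & Hpo & Hq & Hxi).
    exists (MkArr q'), (idm _), q, xi.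
    exact (pushout_is_2cokernel a b f0 f1 Q q xi q' Hpo Hq Hxi inC Hb).
  - intros a b f0 f1 _ Hb Hab c w0 w1 xc.
    destruct (pushout_mediator_exists C a b f0 f1 Hab) as (Q & q & xi & q' & Hpo & Hq & Hxi).
    exact (inC_2cokernel_is_2cokernel a b f0 f1 Q q xi q' Hpo Hq Hxi c w0 w1 xc Hb).
Qed.
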